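(* Let $a\in[0,\infty)$ and let $t:[0,1]\to[0,\infty]$ and $s:[0,\infty]\to[0,1]$ be continuous and increasing functions such that (1) $t(x)=\infty$ if and only if $x=1$; (2) $t(x)=\frac{a}{2}$ if and only if $x=0$; (3) $s(x)=0$ if and only if $x\in[0,a]$; (4) $s(x)=1$ if and only if $x=\infty$. Then the function $G_{t,s}:[0,1]^2\to[0,1]$ defined by $G_{t,s}(x,y)=s(t(x)+t(y))$ is a grouping function.
   Context: ''Increasing'' means non-decreasing. Arithmetic in $[0,\infty]$ uses $c+\infty=\infty$; continuity on $[0,\infty]$ refers to the usual topology of the extended half-line. A grouping function is a map $G:[0,1]^2\to[0,1]$ that is (G1) commutative, (G2) $G(x,y)=0$ iff $x=y=0$, (G3) $G(x,y)=1$ iff $x=1$ or $y=1$, (G4) increasing in each variable, (G5) continuous. *)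

From HB Require Import structures.
From mathcomp Require Import all_boot all_order all_algebra.
From mathcomp Require Import all_classical all_reals all_analysis.
Set Implicit Arguments. Unset Strict Implicit. Unset Printing Implicit Defensive.
Import Order.TTheory GRing.Theory Num.Theory.
Import numFieldNormedType.Exports.
Local Open Scope classical_set_scope.
Local Open Scope ring_scope.

Definition unit_itv (R : realType) : set R := [set x | 0 <= x <= 1].
Arguments unit_itv : clear implicits.

(* A grouping function G : [0,1]^2 -> [0,1], represented as a function
   R -> R -> R whose behaviour is only constrained on [0,1]^2. *)
Definition grouping_function (R : realType) (G : R -> R -> R) : Prop :=
  (forall x y, x \in unit_itv R -> y \in unit_itv R -> 0 <= G x y <= 1) /\
  (forall x y, x \in unit_itv R -> y \in unit_itv R -> G x y = G y x) /\
  (forall x y, x \in unit_itv R -> y \in unit_itv R ->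
     (G x y = 0 <-> (x = 0 /\ y = 0))) /\
  (forall x y, x \in unit_itv R -> y \in unit_itv R ->
     (G x y = 1 <-> (x = 1 \/ y = 1))) /\
  (forall x x' y, x \in unit_itv R -> x' \in unit_itv R -> y \in unit_itv R ->
     x <= x' -> G x y <= G x' y) /\
  (forall x y y', x \in unit_itv R -> y \in unit_itv R -> y' \in unit_itv R ->
     y <= y' -> G x y <= G x y') /\
  {within [set p : R * R | p.1 \in unit_itv R /\ p.2 \in unit_itv R],
     continuous (fun p : R * R => G p.1 p.2)}.

(* Since t is increasing with t 0 = a/2, both summands of t x + t y lie in
   [a/2, +oo]; hence the sum is at most a exactly when both equal a/2, i.e.
   x = y = 0, and it is +oo exactly when one summand is, i.e. x = 1 or y = 1.
   These are precisely the zero set and the one set of s.  Monotonicity and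
   continuity pass through the composition; extended-real addition is
   continuous here because nonnegative summands never produce +oo - oo. *)
From HB Require Import structures.
From mathcomp Require Import all_boot all_order all_algebra.
From mathcomp Require Import all_classical all_reals all_analysis.
From mathcomp Require Import lra.
Import Order.TTheory GRing.Theory Num.Theory.
Import numFieldNormedType.Exports.
Local Open Scope classical_set_scope.
Local Open Scope ring_scope.

Lemma continuous_within_comp {T U V : topologicalType} (A : set T) (B : set U)
    (f : T -> U) (g : U -> V) :
  {within A, continuous f} -> (forall x, A x -> B (f x)) ->
  {within B, continuous g} -> {within A, continuous (g \o f)}.
Proof.
move=> /subspace_continuousP cf fAB /subspace_continuousP cg.
apply/subspace_continuousP => x Ax N /(cg _ (fAB _ Ax)) /(cf _ Ax).
by apply: (@filterS _ (nbhs x)) => z /= gfN Az; exact: gfN Az (fAB _ Az).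
Qed.

Section extended_real_sum.
Variable R : realType.
Local Open Scope ereal_scope.

Lemma continuous_within_adde {T1 T2 : topologicalType} (A : set T1) (B : set T2)
    (f : T1 -> \bar R) (g : T2 -> \bar R) :
  {within A, continuous f} -> {within B, continuous g} ->
  (forall x y, A x -> B y -> f x +? g y) ->
  {within A `*` B, continuous (fun p => f p.1 + g p.2)}.
Proof.
move=> cf cg fg_def.
have cf1 : {within A `*` B, continuous (f \o fst)}.
  apply: continuous_within_comp cf; last by move=> p [].
  by apply: continuous_subspaceT => p; exact: cvg_fst.
have cg2 : {within A `*` B, continuous (g \o snd)}.
  apply: continuous_within_comp cg; last by move=> p [].
  by apply: continuous_subspaceT => p; exact: cvg_snd.
apply/subspace_continuousP => -[x y] [Ax By].
apply: cvgeD; first exact: fg_def.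
- exact: (proj1 (subspace_continuousP _ _) cf1).
- exact: (proj1 (subspace_continuousP _ _) cg2).
Qed.

Lemma adde_eq_pinftyP (u v : \bar R) : u != -oo -> v != -oo ->
  u + v = +oo <-> u = +oo \/ v = +oo.
Proof.
by case: u v => [u| |] [v| |] //= _ _; split=> [|[]] //; by [left|right].
Qed.

Lemma adde_le_lbD_eq (b c : R) (u v : \bar R) : b%:E <= u -> c%:E <= v ->
  u + v <= (b + c)%:E <-> u = b%:E /\ v = c%:E.
Proof.
case: u v => [u| |] [v| |] //=; rewrite ?lee_fin => bu cv.
  by split=> [uv|[[->] [->]]] //; split; congr EFin; lra.
all: by split=> // -[].
Qed.

End extended_real_sum.

Theorem theorem6p2 (R : realType) (a : R) (t : R -> \bar R) (s : \bar R -> R)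
  (ha : 0 <= a)
  (* t : [0,1] -> [0,oo], continuous and increasing *)
  (t_range : forall x, x \in unit_itv R -> (0 <= t x)%E)
  (t_incr : forall x y, x \in unit_itv R -> y \in unit_itv R ->
     x <= y -> (t x <= t y)%E)
  (t_cont : {within unit_itv R, continuous t})
  (* s : [0,oo] -> [0,1], continuous and increasing *)
  (s_range : forall x : \bar R, (0 <= x)%E -> 0 <= s x <= 1)
  (s_incr : forall x y : \bar R, (0 <= x)%E -> (0 <= y)%E ->
     (x <= y)%E -> s x <= s y)
  (s_cont : {within [set x : \bar R | (0 <= x)%E], continuous s})
  (h1 : forall x, x \in unit_itv R -> (t x = +oo%E <-> x = 1))
  (h2 : forall x, x \in unit_itv R -> (t x = (a / 2)%:E <-> x = 0))
  (h3 : forall x : \bar R, (0 <= x)%E -> (s x = 0 <-> (x <= a%:E)%E))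
  (h4 : forall x : \bar R, (0 <= x)%E -> (s x = 1 <-> x = +oo%E)) :
  grouping_function (fun x y => s (t x + t y)%E).
Proof.
have U0 : 0 \in unit_itv R by rewrite inE /unit_itv /= lexx ler01.
have t_ge_half x : x \in unit_itv R -> ((a / 2)%:E <= t x)%E.
  move=> Ux; rewrite -(proj2 (h2 _ U0) erefl); apply: t_incr => //.
  by move: Ux; rewrite inE => /andP[].
have tNy x : x \in unit_itv R -> t x != -oo%E.
  by move/t_range; apply: contraTneq => ->.
have tD_ge0 x y : x \in unit_itv R -> y \in unit_itv R -> (0 <= t x + t y)%E.
  by move=> Ux Uy; apply: adde_ge0; exact: t_range.
split; first by move=> x y Ux Uy; exact/s_range/tD_ge0.
split; first by move=> x y _ _; rewrite addeC.
split.
  move=> x y Ux Uy; rewrite h3 ?tD_ge0 // {1}[a]splitr.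
  rewrite adde_le_lbD_eq ?t_ge_half //.
  by rewrite (h2 _ Ux) (h2 _ Uy).
split.
  move=> x y Ux Uy; rewrite h4 ?tD_ge0 // adde_eq_pinftyP ?tNy //.
  by rewrite (h1 _ Ux) (h1 _ Uy).
split.
  move=> x x' y Ux Ux' Uy xx'; apply: s_incr; rewrite ?tD_ge0 //.
  by apply: leeD => //; exact: t_incr.
split.
  move=> x y y' Ux Uy Uy' yy'; apply: s_incr; rewrite ?tD_ge0 //.
  by apply: leeD => //; exact: t_incr.
have -> : [set p : R * R | p.1 \in unit_itv R /\ p.2 \in unit_itv R] =
          unit_itv R `*` unit_itv R by apply/seteqP; split=> p; rewrite /= !inE.
apply: (@continuous_within_comp _ _ _ _ [set x : \bar R | (0 <= x)%E]
          (fun p => t p.1 + t p.2)%E) s_cont.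
- apply: continuous_within_adde => // x y Ux Uy.
  by apply: ge0_adde_def; rewrite inE; apply/t_range/mem_set.
- by move=> p [Up1 Up2]; apply: tD_ge0; apply/mem_set.
Qed.
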